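(* Let $G_1=(V,D_1,B_1)$ and $G_2=(V,D_2,B_2)$ be simple mixed graphs with the same skeleton and the same collider triples, and let $(\Lambda_i,\Omega_i)\in\mathbb{R}^{D_i}\times\mathit{PD}(B_i)$ for $i=1,2$. If $(\Lambda_2,\Omega_2^{od})$ equals the edge labeling on $G_2$ induced by $(\Lambda_1,\Omega_1)$, then $\det(I-\Lambda_1)=\det(I-\Lambda_2)$. In particular, if $\Lambda_1\in\mathbb{R}^{D_1}_{\mathrm{reg}}$ then $\Lambda_2\in\mathbb{R}^{D_2}_{\mathrm{reg}}$.
   Context: A mixed graph with finite vertex set $V$ is a triple $G=(V,D,B)$ with $D$ a set of ordered pairs $(i,j)$, $i\ne j$ (directed edges $i\to j$, head $j$) and $B$ a set of unordered pairs $\{i,j\}$, $i\ne j$ (bidirected edges $i\leftrightarrow j$, both endpoints heads). It is simple if any two distinct nodes are joined by at most one edge. The skeleton is the undirected graph obtained by replacing all edges by undirected ones. A collider triple is a triple $(i,j,k)$ with an edge between $i$ and $j$ and an edge between $j$ and $k$, $j$ being a head on both (regardless of adjacency of $i,k$). $\mathbb{R}^D$ is the set of real $V\times V$ matrices $\Lambda$ with $\lambda_{ij}=0$ for $(i,j)\notin D$, $\mathbb{R}^D_{\mathrm{reg}}$ those with $I-\Lambda$ invertible; $\mathit{PD}(B)$ is the set of positive definite symmetric matrices $\Omega$ with $\omega_{ij}=0$ for $i\neq j$, $\{i,j\}\notin B$. For a matrix $\Omega$, $\Omega^{od}$ denotes its off-diagonal part ($\Omega=\Omega^d+\Omega^{od}$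 with $\Omega^d$ diagonal). For simple $G_1,G_2$ with the same skeleton and $(\Lambda_1,\Omega_1)$ for $G_1$, the induced edge labeling on $G_2$ is the pair $(\Lambda_2,\Omega_2^{od})$ with $(\Lambda_2)_{ij}=(\Lambda_1)_{ij}$ if $i\to j\in G_1$ and $i\to j\in G_2$; $=(\Lambda_1)_{ji}$ if $j\to i\in G_1$ and $i\to j\in G_2$; $=(\Omega_1)_{ij}$ if $i\leftrightarrow j\in G_1$ and $i\to j\in G_2$; $=0$ if $i\to j\notin G_2$; and $(\Omega_2^{od})_{ij}=(\Lambda_1)_{ij}$ if $i\to j\in G_1$ and $i\leftrightarrow j\in G_2$; $=(\Lambda_1)_{ji}$ if $j\to i\in G_1$ and $i\leftrightarrow j\in G_2$; $=(\Omega_1)_{ij}$ if $i\leftrightarrow j\in G_1$ and $i\leftrightarrow j\in G_2$; $=0$ if $i\leftrightarrow j\notin G_2$ or $i=j$. *)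

From HB Require Import structures.
From mathcomp Require Import all_boot all_order all_algebra.
Set Implicit Arguments. Unset Strict Implicit. Unset Printing Implicit Defensive.
Import Order.TTheory GRing.Theory Num.Theory.
Local Open Scope ring_scope.

(* A mixed graph on 'I_n: D i j = directed edge i -> j, B i j = bidirected edge
   i <-> j (stored as a symmetric relation). *)
Definition mixed_graph (n : nat) (D B : rel 'I_n) : Prop :=
  (forall i, ~~ D i i) /\ (forall i, ~~ B i i) /\ (forall i j, B i j = B j i).

Definition simple_mg (n : nat) (D B : rel 'I_n) : Prop :=
  forall i j, i != j ->
    [&& ~~ (D i j && D j i), ~~ (D i j && B i j) & ~~ (D j i && B i j)].

Definition skel (n : nat) (D B : rel 'I_n) (i j : 'I_n) : bool :=
  [|| D i j, D j i | B i j].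

(* the (unique, in a simple graph) edge between i and j has a head at j *)
Definition head_at (n : nat) (D B : rel 'I_n) (i j : 'I_n) : bool :=
  D i j || B i j.

(* collider triple (i,j,k): edges i-j and j-k, both with a head at j;
   i and k are distinct (adjacency of i,k irrelevant) *)
Definition collider (n : nat) (D B : rel 'I_n) (i j k : 'I_n) : bool :=
  [&& i != k, head_at D B i j & head_at D B k j].

Definition supp_D (R : nzRingType) (n : nat) (D : rel 'I_n) (L : 'M[R]_n) : Prop :=
  forall i j, ~~ D i j -> L i j = 0.

Definition posdef (R : realFieldType) (n : nat) (O : 'M[R]_n) : Prop :=
  O^T = O /\ forall v : 'rV[R]_n, v != 0 -> 0 < (v *m O *m v^T) ord0 ord0.

Definition PD_B (R : realFieldType) (n : nat) (B : rel 'I_n) (O : 'M[R]_n) : Prop :=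
  posdef O /\ forall i j, i != j -> ~~ B i j -> O i j = 0.

Definition offdiag (R : nzRingType) (n : nat) (O : 'M[R]_n) : 'M[R]_n :=
  \matrix_(i, j) (if i == j then 0 else O i j).

(* label of the G1-edge between i and j, read in direction i,j *)
Definition edge_label (R : nzRingType) (n : nat) (D1 B1 : rel 'I_n)
  (L1 O1 : 'M[R]_n) (i j : 'I_n) : R :=
  if D1 i j then L1 i j else if D1 j i then L1 j i
  else if B1 i j then O1 i j else 0.

Definition induced_L (R : nzRingType) (n : nat) (D1 B1 D2 : rel 'I_n)
  (L1 O1 : 'M[R]_n) : 'M[R]_n :=
  \matrix_(i, j) (if D2 i j then edge_label D1 B1 L1 O1 i j else 0).

Definition induced_Ood (R : nzRingType) (n : nat) (D1 B1 B2 : rel 'I_n)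
  (L1 O1 : 'M[R]_n) : 'M[R]_n :=
  \matrix_(i, j) (if (i != j) && B2 i j then edge_label D1 B1 L1 O1 i j else 0).

From mathcomp Require Import all_boot all_order all_algebra.
From mathcomp Require Import fingroup perm.
Import GRing.Theory Num.Theory.
Set Implicit Arguments. Unset Strict Implicit. Unset Printing Implicit Defensive.
Local Open Scope ring_scope.

(* Only permutations whose nontrivial cycles are directed cycles of D1 (of
   length at least 3, G1 being simple) contribute to the Leibniz expansion of
   det(I - L1). Such a cycle has no collider in G1, hence none in G2; so in G2
   it carries no bidirected edge and is directed, either along the permutation
   or against it. Inverting the permutation on the cycles of the second kind
   is a bijection onto the permutations contributing to det(I - L2); it keeps
   the cycle sets, hence the sign, and by definition of the induced labeling
   it keeps the product of entries. *)

Lemma perm_closed_inv (T : finType) (s : {perm T}) (f : pred T) :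
  (forall x, f x -> f (s x)) -> forall x, f (s x) = f x.
Proof.
move=> fs x; apply/esym.
apply: (intro_closed (fconnect_sym (@perm_inj _ s)) (a := f)) => [y _ /eqP <-|];
  [exact: fs | exact: eqxx].
Qed.

Section Orientation.

Variables (T : finType) (s : {perm T}) (f : pred T).

Definition orient_fun x := if f x then s x else (s^-1)%g x.

(* The fallback [s] is a junk value, never used when [f] is [s]-invariant. *)
Definition orient : {perm T} :=
  if injectiveP orient_fun is ReflectT inj_orient then perm inj_orient else s.

Lemma orient_eq (t : {perm T}) : orient_fun =1 t -> orient = t.
Proof.
move=> eq_t; rewrite /orient; case: injectiveP => [inj_o | []].
  by apply/permP => x; rewrite permE eq_t.
exact: eq_inj (@perm_inj _ t) (fsym eq_t).
Qed.

Hypothesis f_inv : forall x, f (s x) = f x.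

Lemma f_invV x : f ((s^-1)%g x) = f x.
Proof. by rewrite -[in RHS](permKV s x) f_inv. Qed.

Lemma orient_fun_inj : injective orient_fun.
Proof.
have cross x y : f x -> ~~ f y -> s x <> (s^-1)%g y.
  by move=> fx fy sxy; move: fy; rewrite -(permKV s y) -sxy !f_inv fx.
move=> x y; rewrite /orient_fun.
case fx: (f x); case fy: (f y); try exact: perm_inj.
- by move/cross; rewrite fx fy => /(_ isT isT).
- by move/esym/cross; rewrite fx fy => /(_ isT isT).
Qed.

Lemma orientE x : orient x = orient_fun x.
Proof.
rewrite /orient; case: injectiveP => [inj_o | []]; [exact: permE | exact: orient_fun_inj].
Qed.

Lemma f_dirX k x : f (((if f x then s else (s^-1)%g) ^+ k)%g x) = f x.
Proof.
elim: k => [|k IHk]; first by rewrite expg0 perm1.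
by rewrite expgSr permM; case fx: (f x) IHk => IHk; rewrite ?f_inv ?f_invV IHk.
Qed.

Lemma orientX k x : (orient ^+ k)%g x = ((if f x then s else (s^-1)%g) ^+ k)%g x.
Proof.
elim: k => [|k IHk]; first by rewrite !expg0 !perm1.
rewrite !expgSr !permM IHk orientE /orient_fun f_dirX.
by case: (f x).
Qed.

Lemma porbit_orient x : porbit orient x = porbit s x.
Proof.
transitivity (porbit (if f x then s else (s^-1)%g) x); last first.
  by case: (f x); rewrite ?porbitV.
by apply/porbit_setP => y; apply/porbitP/porbitP => -[k ->]; exists k; rewrite orientX.
Qed.

Lemma odd_orient : odd_perm orient = odd_perm s.
Proof. by rewrite /odd_perm /porbits (eq_imset _ porbit_orient). Qed.

End Orientation.

Definition along n (D : rel 'I_n) (s : 'S_n) : bool :=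
  [forall i, (s i != i) ==> D i (s i)].

Lemma alongP n (D : rel 'I_n) (s : 'S_n) :
  reflect (forall i, s i != i -> D i (s i)) (along D s).
Proof. by apply: (iffP forallP) => sD i; apply/implyP; apply: sD. Qed.

Lemma det_along (R : comNzRingType) n (D : rel 'I_n) (A : 'M[R]_n) :
  (forall i j, i != j -> ~~ D i j -> A i j = 0) ->
  \det A = \sum_(s | along D s) (-1) ^+ s * \prod_i A i (s i).
Proof.
move=> A_D; rewrite /determinant (bigID (along D)) /= [X in _ + X]big1 ?addr0 //.
move=> s /forallPn[i]; rewrite negb_imply => /andP[si nD].
by rewrite (bigD1 i) //= A_D 1?eq_sym // mul0r mulr0.
Qed.

Lemma det_one_sub_along (R : comNzRingType) n (D : rel 'I_n) (L : 'M[R]_n) :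
  supp_D D L ->
  \det (1%:M - L) = \sum_(s | along D s) (-1) ^+ s * \prod_i (1%:M - L) i (s i).
Proof.
by move=> L_D; apply: det_along => i j ij nD; rewrite !mxE L_D // (negbTE ij) subr0.
Qed.

Lemma mixed_graph_irr n (D B : rel 'I_n) i : mixed_graph D B -> D i i = false.
Proof. by case=> /(_ i) /negbTE. Qed.

Lemma skel_head n (D B : rel 'I_n) i j :
  mixed_graph D B -> skel D B i j = D i j || head_at D B j i.
Proof. by case=> _ [_ B_sym]; rewrite /skel /head_at (B_sym i j). Qed.

Lemma head_at_tail n (D B : rel 'I_n) i j :
  mixed_graph D B -> simple_mg D B -> D i j -> ~~ head_at D B j i.
Proof.
case=> D_irr [_ B_sym] simple Dij.
have ij : i != j by apply: contraTneq Dij => ->; exact: D_irr.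
by move: (simple i j ij); rewrite Dij /head_at (B_sym j i) negb_or => /and3P[-> -> _].
Qed.

Record mg_equiv n (D1 B1 D2 B2 : rel 'I_n) : Prop := MgEquiv {
  mixed1 : mixed_graph D1 B1;
  mixed2 : mixed_graph D2 B2;
  simple1 : simple_mg D1 B1;
  simple2 : simple_mg D2 B2;
  skel_eq : forall i j, skel D1 B1 i j = skel D2 B2 i j;
  collider_eq : forall i j k, collider D1 B1 i j k = collider D2 B2 i j k }.

Lemma mg_equiv_sym n (D1 B1 D2 B2 : rel 'I_n) :
  mg_equiv D1 B1 D2 B2 -> mg_equiv D2 B2 D1 B1.
Proof. by case=> *; split=> // *; symmetry. Qed.

Definition reorient n (D : rel 'I_n) (s : 'S_n) : 'S_n :=
  orient s [pred i | D i (s i)].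

Section Reorient.

Variables (n : nat) (D1 B1 D2 B2 : rel 'I_n).
Hypothesis equiv : mg_equiv D1 B1 D2 B2.
Variable s : 'S_n.
Hypothesis s_along : forall i, s i != i -> D1 i (s i).

Let D1_irr i : D1 i i = false. Proof. exact: mixed_graph_irr (mixed1 equiv). Qed.
Let D2_irr i : D2 i i = false. Proof. exact: mixed_graph_irr (mixed2 equiv). Qed.

Lemma perm_succ_neq i : s i != i -> s (s i) != s i.
Proof. by rewrite (inj_eq perm_inj). Qed.

Lemma D1_succ i : D1 i (s i) = (s i != i).
Proof. by case: eqVneq => [-> | /s_along //]; rewrite D1_irr. Qed.

Lemma D1_pred i : D1 i ((s^-1)%g i) = false.
Proof.
have [-> | svi] := eqVneq ((s^-1)%g i) i; first by rewrite D1_irr.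
have := head_at_tail (mixed1 equiv) (simple1 equiv) (s_along (i := (s^-1)%g i) _).
by rewrite permKV eq_sym => /(_ svi); rewrite /head_at negb_or => /andP[/negbTE].
Qed.

Lemma no_2cycle i : s i != i -> (s^-1)%g i != s i.
Proof.
move=> si; apply/eqP => svs.
have := head_at_tail (mixed1 equiv) (simple1 equiv) (s_along si).
by have := s_along (perm_succ_neq si); rewrite -{2}svs permKV /head_at => ->.
Qed.

Lemma no_collider2 i : s i != i ->
  ~~ (head_at D2 B2 ((s^-1)%g i) i && head_at D2 B2 (s i) i).
Proof.
move=> si; have := head_at_tail (mixed1 equiv) (simple1 equiv) (s_along si).
move=> /negbTE no_head; have : ~~ collider D1 B1 ((s^-1)%g i) i (s i).
  by rewrite /collider no_head !andbF.
by rewrite (collider_eq equiv) /collider no_2cycle.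
Qed.

Lemma skel2_succ i : s i != i -> D2 i (s i) || head_at D2 B2 (s i) i.
Proof.
by move=> si; rewrite -(skel_head _ _ (mixed2 equiv)) -(skel_eq equiv) /skel s_along.
Qed.

Lemma D2_succ_neq i : D2 i (s i) -> s i != i.
Proof. by apply: contraTneq => ->; rewrite D2_irr. Qed.

Lemma D2_succ_step i : D2 i (s i) -> D2 (s i) (s (s i)).
Proof.
move=> fi; have si := D2_succ_neq fi.
have hi : head_at D2 B2 i (s i) by rewrite /head_at fi.
have := no_collider2 (perm_succ_neq si); rewrite permK hi /= => /negbTE no_head.
by have := skel2_succ (perm_succ_neq si); rewrite no_head orbF.
Qed.

Lemma D2_succS i : D2 (s i) (s (s i)) = D2 i (s i).
Proof. exact: (perm_closed_inv (f := fun i => D2 i (s i)) D2_succ_step). Qed.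

Lemma D2_succV i : D2 ((s^-1)%g i) i = D2 i (s i).
Proof. by have := D2_succS ((s^-1)%g i); rewrite permKV. Qed.

Lemma D2_rev i : s i != i -> ~~ D2 i (s i) -> D2 (s i) i.
Proof.
move=> si nfi; have := skel2_succ si; rewrite (negbTE nfi) /= /head_at => /orP[// | Bi].
have hi : head_at D2 B2 i (s i).
  by case: (mixed2 equiv) => _ [_ B_sym]; rewrite /head_at B_sym Bi orbT.
have := no_collider2 (perm_succ_neq si); rewrite permK hi /= => /negbTE no_head.
by have := skel2_succ (perm_succ_neq si); rewrite no_head orbF D2_succS (negbTE nfi).
Qed.

Lemma reorientE i : reorient D2 s i = if D2 i (s i) then s i else (s^-1)%g i.
Proof. exact: (orientE D2_succS). Qed.

Lemma along_reorient i : reorient D2 s i != i -> D2 i (reorient D2 s i).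
Proof.
rewrite reorientE; case: ifP => // nfi svi.
have := D2_rev (i := (s^-1)%g i); rewrite permKV; apply; first by rewrite eq_sym.
by rewrite D2_succV nfi.
Qed.

Lemma odd_reorient : odd_perm (reorient D2 s) = odd_perm s.
Proof. exact: (odd_orient D2_succS). Qed.

Lemma reorientK : reorient D1 (reorient D2 s) = s.
Proof.
apply: orient_eq => i; rewrite /orient_fun /= reorientE.
have [fi | nfi] := boolP (D2 i (s i)).
  by rewrite D1_succ D2_succ_neq.
rewrite D1_pred; apply: (canLR (permK _)).
by rewrite reorientE D2_succS (negbTE nfi) permK.
Qed.

Lemma prod_reorient (R : comNzRingType) (L1 O1 : 'M[R]_n) : supp_D D1 L1 ->
  \prod_i (1%:M - induced_L D1 B1 D2 L1 O1) i (reorient D2 s i) =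
  \prod_i (1%:M - L1) i (s i).
Proof.
(* [h i] is the G1-tail of the cycle edge between [i] and [reorient D2 s i]. *)
move=> L1_D1; pose h i := if D2 i (s i) then i else (s^-1)%g i.
have h_inj : injective h.
  move=> i j; rewrite /h.
  case fi: (D2 i (s i)); case fj: (D2 j (s j));
    [by [] | move=> ij | move=> ij | exact: perm_inj].
  - by move: fi; rewrite ij permKV D2_succV fj.
  - by move: fj; rewrite -ij permKV D2_succV fi.
rewrite [RHS](reindex_inj h_inj); apply: eq_bigr => i _.
rewrite /h !mxE reorientE; case: ifP => fi.
  by rewrite fi /edge_label D1_succ D2_succ_neq.
rewrite permKV; have [sv_i | svi] := eqVneq ((s^-1)%g i) i.
  by rewrite sv_i D2_irr L1_D1 ?D1_irr.
have := along_reorient (i := i); rewrite reorientE fi => /(_ svi) ->.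
rewrite /edge_label D1_pred.
by have := s_along (i := (s^-1)%g i); rewrite permKV eq_sym => /(_ svi) ->.
Qed.

End Reorient.

Lemma supp_induced_L (R : nzRingType) n (D1 B1 D2 : rel 'I_n) (L1 O1 : 'M[R]_n) :
  supp_D D2 (induced_L D1 B1 D2 L1 O1).
Proof. by move=> i j nD; rewrite mxE (negbTE nD). Qed.

Lemma det_induced_L (R : comNzRingType) n (D1 B1 D2 B2 : rel 'I_n) (L1 O1 : 'M[R]_n) :
  mg_equiv D1 B1 D2 B2 -> supp_D D1 L1 ->
  \det (1%:M - L1) = \det (1%:M - induced_L D1 B1 D2 L1 O1).
Proof.
move=> equiv L1_D1; have equiv' := mg_equiv_sym equiv.
rewrite (det_one_sub_along L1_D1).
rewrite (det_one_sub_along (@supp_induced_L _ _ D1 B1 D2 L1 O1)).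
rewrite [RHS](reindex_onto (reorient D2) (reorient D1)) => [|t /alongP t_along];
  last exact: (reorientK equiv' t_along).
apply: eq_big => [s | s /alongP s_along].
  apply/idP/idP => [/alongP s_along | /andP[/alongP t_along /eqP s_eq]];
    last rewrite -s_eq.
    rewrite (reorientK equiv s_along) eqxx andbT.
    by apply/alongP => i; exact: (along_reorient equiv s_along).
  by apply/alongP => i; exact: (along_reorient equiv' t_along).
by rewrite (odd_reorient equiv s_along) (prod_reorient equiv s_along O1 L1_D1).
Qed.

Theorem lemma4 (R : realFieldType) (n : nat) (D1 B1 D2 B2 : rel 'I_n)
  (L1 O1 L2 O2 : 'M[R]_n) :
  mixed_graph D1 B1 -> mixed_graph D2 B2 ->
  simple_mg D1 B1 -> simple_mg D2 B2 ->
  (forall i j, skel D1 B1 i j = skel D2 B2 i j) ->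
  (forall i j k, collider D1 B1 i j k = collider D2 B2 i j k) ->
  supp_D D1 L1 -> PD_B B1 O1 ->
  supp_D D2 L2 -> PD_B B2 O2 ->
  L2 = induced_L D1 B1 D2 L1 O1 ->
  offdiag O2 = induced_Ood D1 B1 B2 L1 O1 ->
  \det (1%:M - L1) = \det (1%:M - L2) /\
  ((1%:M - L1) \in unitmx -> (1%:M - L2) \in unitmx).
Proof.
move=> mixed1 mixed2 simple1 simple2 skel_eq collider_eq L1_D1 _ _ _ -> _.
have equiv := MgEquiv mixed1 mixed2 simple1 simple2 skel_eq collider_eq.
have det_eq := det_induced_L O1 equiv L1_D1.
by split=> //; rewrite !unitmxE det_eq.
Qed.
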